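(* Let $S$ be a semigroup with finite $\mathcal{R}$-height whose kernel is completely simple, and let $A$ be a left ideal of $S$. Let $n$ be the maximum length of a chain of $\mathcal{R}$-classes of $S$ each of which intersects $A$. Then $\mathrm{H}_{\mathcal{R}}(A)\leq 2n-1$.
   Context: For a semigroup $S$, $S^1$ denotes $S$ with an identity adjoined if necessary. Green's preorder: $a\leq_{\mathcal{R}} b$ iff $aS^1\subseteq bS^1$; $\mathcal{R}$ is the associated equivalence. $\mathcal{R}$-classes are ordered by $R_a\leq R_b$ iff $a\leq_{\mathcal{R}} b$, and the $\mathcal{R}$-height $\mathrm{H}_{\mathcal{R}}(S)$ is the supremum of the cardinalities of chains of $\mathcal{R}$-classes. A left ideal is a non-empty subset $A$ with $SA\subseteq A$; $\mathrm{H}_{\mathcal{R}}(A)$ is computed in the semigroup $A$ itself. The kernel of $S$ is its unique minimal ideal. A semigroup is completely simple if it has no proper ideals and has both a minimal right ideal and a minimal left ideal. *)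

From Stdlib Require Import Arith.

Set Implicit Arguments.

Section Semigroups.
Variable T : Type.
Variable mul : T -> T -> T.

(* Green's R-preorder computed inside the subsemigroup with carrier P:
   a <=_R b  iff  a P^1 ⊆ b P^1, i.e. a = b or a = b c for some c in P. *)
Definition leR_in (P : T -> Prop) (a b : T) : Prop :=
  a = b \/ exists c, P c /\ a = mul b c.

Definition ltR_in (P : T -> Prop) (a b : T) : Prop :=
  leR_in P a b /\ ~ leR_in P b a.

(* A chain of k R-classes (computed in the semigroup with carrier P),
   given by representatives f 0 > f 1 > ... > f (k-1), all satisfying Q
   (i.e. each R-class meets Q). *)
Definition R_chain (P Q : T -> Prop) (f : nat -> T) (k : nat) : Prop :=
  (forall i, i < k -> Q (f i)) /\
  (forall i, S i < k -> ltR_in P (f (S i)) (f i)).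

Definition setT_S : T -> Prop := fun _ => True.

Definition R_height_le (P : T -> Prop) (m : nat) : Prop :=
  forall f k, R_chain P P f k -> k <= m.

Definition finite_R_height : Prop := exists m, R_height_le setT_S m.

Definition ideal_in (K I : T -> Prop) : Prop :=
  (exists x, I x) /\ (forall x, I x -> K x) /\
  (forall a x, K a -> I x -> I (mul a x) /\ I (mul x a)).

Definition right_ideal_in (K I : T -> Prop) : Prop :=
  (exists x, I x) /\ (forall x, I x -> K x) /\
  (forall a x, K a -> I x -> I (mul x a)).

Definition left_ideal_in (K I : T -> Prop) : Prop :=
  (exists x, I x) /\ (forall x, I x -> K x) /\
  (forall a x, K a -> I x -> I (mul a x)).

Definition minimal_right_ideal_in (K I : T -> Prop) : Prop :=
  right_ideal_in K I /\
  forall J, right_ideal_in K J -> (forall x, J x -> I x) -> forall x, I x -> J x.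

Definition minimal_left_ideal_in (K I : T -> Prop) : Prop :=
  left_ideal_in K I /\
  forall J, left_ideal_in K J -> (forall x, J x -> I x) -> forall x, I x -> J x.

Definition simple_in (K : T -> Prop) : Prop :=
  forall I, ideal_in K I -> forall x, K x -> I x.

Definition completely_simple_in (K : T -> Prop) : Prop :=
  simple_in K /\ (exists R, minimal_right_ideal_in K R) /\
  (exists L, minimal_left_ideal_in K L).

Definition is_kernel (K : T -> Prop) : Prop :=
  ideal_in setT_S K /\ forall I, ideal_in setT_S I -> forall x, K x -> I x.

Definition left_ideal (A : T -> Prop) : Prop := left_ideal_in setT_S A.

End Semigroups.

From Stdlib Require Import Arith Lia Classical.

Set Implicit Arguments.

(* Send an R-chain of A to the R-classes of S containing its members.  Two
   consecutive members x <_A y lying in one R-class of S satisfy y = x t and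
   x = y c with c in A, so x = x (t c) is in xA while y is not in yA; hence no
   R-class of S holds three consecutive members and the chain has at most 2n
   members.  If it has exactly 2n, its last member x is the lower half of such
   a pair.  Then x is outside the kernel K: kernel elements are regular, and
   y = y z y would put y in yA.  So x w, for w in K and A, lies strictly below
   x in S, giving n + 1 R-classes of S meeting A. *)

Lemma simple_mem_square_mul_r (T : Type) (mul : T -> T -> T)
  (assoc : forall x y z, mul x (mul y z) = mul (mul x y) z)
  (K : T -> Prop) (K_mul : forall u v, K u -> K v -> K (mul u v)) :
  simple_in mul K -> (exists R, minimal_right_ideal_in mul K R) ->
  forall a, K a -> exists s, K s /\ a = mul (mul a a) s.
Proof.
  intros K_simple [R [[[r0 Rr0] [RK R_mul]] R_min]] a Ka.
  assert (KR_ideal : ideal_in mul K (fun y => exists k r, K k /\ R r /\ y = mul k r)).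
  { split; [|split].
    - exists (mul r0 r0), r0, r0. auto.
    - intros y [k [r [Kk [Rr ->]]]]. auto.
    - intros b y Kb [k [r [Kk [Rr ->]]]]. split.
      + exists (mul b k), r. rewrite assoc. auto.
      + exists k, (mul r b). rewrite <- assoc. auto. }
  destruct (K_simple _ KR_ideal a Ka) as [k [r [Kk [Rr Ha]]]].
  set (J := fun r' => R r' /\ exists x, K x /\ mul k r' = mul (mul a a) x).
  assert (J_right_ideal : right_ideal_in mul K J).
  { split; [|split].
    - exists (mul r (mul a a)). split; [auto|]. exists a. split; [exact Ka|].
      rewrite assoc, <- Ha, assoc. reflexivity.
    - intros y [Ry _]. auto.
    - intros b y Kb [Ry [x [Kx Hx]]]. split; [auto|].
      exists (mul x b). split; [auto|]. rewrite assoc, Hx, <- assoc. reflexivity. }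
  destruct (R_min J J_right_ideal (fun y Jy => proj1 Jy) r Rr) as [_ [s [Ks Hs]]].
  exists s. split; [exact Ks|]. rewrite <- Hs. exact Ha.
Qed.

Lemma simple_in_flip (T : Type) (mul : T -> T -> T) (K : T -> Prop) :
  simple_in mul K -> simple_in (fun x y => mul y x) K.
Proof.
  intros K_simple I [HI [IK I_mul]]. apply K_simple.
  split; [exact HI|split; [exact IK|]].
  intros a x Ka Ix. destruct (I_mul a x Ka Ix). split; assumption.
Qed.

(* The left-handed half of the argument is the right-handed one in the
   opposite semigroup, where minimal left ideals become minimal right ideals. *)
Lemma completely_simple_regular (T : Type) (mul : T -> T -> T)
  (assoc : forall x y z, mul x (mul y z) = mul (mul x y) z)
  (K : T -> Prop) (K_mul : forall u v, K u -> K v -> K (mul u v)) :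
  completely_simple_in mul K -> forall a, K a -> exists x, K x /\ a = mul (mul a x) a.
Proof.
  intros [K_simple [HR HL]] a Ka.
  destruct (simple_mem_square_mul_r assoc K_mul K_simple HR a Ka) as [s [_ Hs]].
  destruct (@simple_mem_square_mul_r T (fun x y => mul y x)
              (fun x y z => eq_sym (assoc z y x)) K (fun u v Ku Kv => K_mul v u Kv Ku)
              (simple_in_flip K_simple) HL a Ka) as [t [Kt Ht]].
  cbv beta in Ht.
  exists t. split; [exact Kt|].
  transitivity (mul (mul a (mul t (mul a a))) s).
  - rewrite <- Ht. exact Hs.
  - rewrite (assoc a t), <- (assoc (mul a t)), <- Hs. reflexivity.
Qed.

Section Chains.
Variables (T : Type) (mul : T -> T -> T).
Hypothesis assoc : forall x y z, mul x (mul y z) = mul (mul x y) z.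

Local Notation leS := (leR_in mul (@setT_S T)).
Local Notation ltS := (ltR_in mul (@setT_S T)).

Lemma leR_in_mono (P Q : T -> Prop) a b :
  (forall x, P x -> Q x) -> leR_in mul P a b -> leR_in mul Q a b.
Proof.
  intros PQ [->|[c [Pc ->]]]; [left; reflexivity|right; exists c; auto].
Qed.

Lemma leR_in_trans (P : T -> Prop) (P_mul : forall u v, P u -> P v -> P (mul u v)) a b c :
  leR_in mul P a b -> leR_in mul P b c -> leR_in mul P a c.
Proof.
  intros [->|[u [Pu ->]]] [->|[v [Pv ->]]].
  - left; reflexivity.
  - right; exists v; auto.
  - right; exists u; auto.
  - right; exists (mul v u). split; [auto|]. symmetry; apply assoc.
Qed.

Definition update (g : nat -> T) (j : nat) (x : T) : nat -> T :=
  fun i => if i =? j then x else g i.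

Lemma R_chain_pred (P Q : T -> Prop) f k :
  R_chain mul P Q f (S k) -> R_chain mul P Q f k.
Proof. intros [Hmem Hlt]. split; intros i Hi; [apply Hmem|apply Hlt]; lia. Qed.

Lemma R_chain_snoc (P Q : T -> Prop) g m x :
  R_chain mul P Q g (S m) -> Q x -> ltR_in mul P x (g m) ->
  R_chain mul P Q (update g (S m) x) (S (S m)).
Proof.
  intros [Hmem Hlt] Qx Hx. unfold update. split.
  - intros i Hi. destruct (Nat.eqb_spec i (S m)); [exact Qx|apply Hmem; lia].
  - intros i Hi. destruct (Nat.eqb_spec (S i) (S m)), (Nat.eqb_spec i (S m)); try lia.
    + replace i with m by lia. exact Hx.
    + apply Hlt; lia.
Qed.

Lemma R_chain_replace_last (P Q : T -> Prop)
  (P_mul : forall u v, P u -> P v -> P (mul u v)) g m x :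
  R_chain mul P Q g (S m) -> Q x -> leR_in mul P x (g m) -> leR_in mul P (g m) x ->
  R_chain mul P Q (update g m x) (S m).
Proof.
  intros [Hmem Hlt] Qx Hxg Hgx. unfold update. split.
  - intros i Hi. destruct (Nat.eqb_spec i m); [exact Qx|apply Hmem; lia].
  - intros i Hi. destruct (Nat.eqb_spec (S i) m), (Nat.eqb_spec i m); try lia.
    + subst m. destruct (Hlt i Hi) as [Hle Hnge]. split.
      * exact (leR_in_trans P_mul Hxg Hle).
      * intro Hge. exact (Hnge (leR_in_trans P_mul Hge Hxg)).
    + apply Hlt; lia.
Qed.

Lemma ideal_lt_mul_r (K : T -> Prop) (hK : ideal_in mul (@setT_S T) K) x w :
  K w -> ~ K x -> ltS (mul x w) x.
Proof.
  destruct hK as [_ [_ K_mul]]. intros Kw HnK. split.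
  - right. exists w. split; [exact I|reflexivity].
  - intros [Hx|[u [_ Hx]]]; apply HnK; rewrite Hx.
    + exact (proj1 (K_mul x w I Kw)).
    + exact (proj2 (K_mul u _ I (proj1 (K_mul x w I Kw)))).
Qed.

Lemma ideal_meets_left_ideal (K A : T -> Prop) :
  ideal_in mul (@setT_S T) K -> left_ideal mul A -> exists w, K w /\ A w.
Proof.
  intros [[k Kk] [_ K_mul]] [[a Aa] [_ A_mul]].
  exists (mul k a). split; [exact (proj2 (K_mul a k I Kk))|exact (A_mul k a I Aa)].
Qed.

Section LeftIdeal.
Variable A : T -> Prop.
Hypothesis hA : left_ideal mul A.

Definition has_right_identity_in (a : T) : Prop := exists c, A c /\ a = mul a c.

Lemma left_ideal_mul a x : A x -> A (mul a x).
Proof. destruct hA as [_ [_ A_mul]]. exact (A_mul a x I). Qed.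

Lemma R_split_upper_no_right_identity x y :
  ltR_in mul A x y -> leS y x -> ~ has_right_identity_in y.
Proof.
  intros [_ Hnyx] [Hyx|[t [_ Hyx]]] [d [Ad Hd]]; apply Hnyx.
  - left; exact Hyx.
  - right. exists (mul t d). split; [exact (left_ideal_mul t Ad)|].
    rewrite assoc, <- Hyx. exact Hd.
Qed.

Lemma R_split_lower_right_identity x y :
  ltR_in mul A x y -> leS y x -> has_right_identity_in x.
Proof.
  intros [[Hxy|[c [Ac Hxy]]] Hnyx] [Hyx|[t [_ Hyx]]];
    try (exfalso; apply Hnyx; left; first [exact Hyx|exact (eq_sym Hxy)]).
  exists (mul t c). split; [exact (left_ideal_mul t Ac)|].
  rewrite assoc, <- Hyx. exact Hxy.
Qed.

Lemma R_split_lower_not_in_kernel (K : T -> Prop)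
  (K_mul_r : forall u v, K u -> K (mul u v))
  (K_regular : forall a, K a -> exists z, a = mul (mul a z) a) x y :
  A y -> ltR_in mul A x y -> leS y x -> ~ K x.
Proof.
  intros Ay Hxy Hyx Kx. apply (R_split_upper_no_right_identity Hxy Hyx).
  assert (Ky : K y) by (destruct Hyx as [->|[t [_ ->]]]; auto).
  destruct (K_regular y Ky) as [z Hz].
  exists (mul z y). split; [exact (left_ideal_mul z Ay)|]. rewrite assoc. exact Hz.
Qed.

(* [g] runs through the R-classes of S met by [f 0], ..., [f k]; the second
   case is the one where [f k] shares its R-class of S with its predecessor. *)
Lemma R_chain_in_A_to_S (f : nat -> T) k :
  R_chain mul A A f (S k) ->
  exists g m, R_chain mul (@setT_S T) A g (S m) /\ g m = f k /\
    (k <= 2 * m \/ (k <= 2 * m + 1 /\ exists j, k = S j /\ leS (f j) (f k))).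
Proof.
  induction k as [|k IH]; intros Hf.
  - exists (fun _ => f 0), 0. split; [split|split; [reflexivity|left; lia]].
    + intros i Hi. apply (proj1 Hf). lia.
    + intros i Hi. lia.
  - destruct (IH (R_chain_pred Hf)) as [g [m [Hg [Hgm Hk]]]].
    assert (Hxy : ltR_in mul A (f (S k)) (f k)) by (apply (proj2 Hf); lia).
    assert (Ax : A (f (S k))) by (apply (proj1 Hf); lia).
    assert (HxyS : leS (f (S k)) (f k))
      by exact (leR_in_mono (@setT_S T) (fun _ _ => I) (proj1 Hxy)).
    destruct (classic (leS (f k) (f (S k)))) as [Hyx|Hnyx].
    + exists (update g m (f (S k))), m.
      split; [|split; [unfold update; rewrite Nat.eqb_refl; reflexivity|]].
      * apply (R_chain_replace_last (fun _ _ _ _ => I) Hg Ax); rewrite Hgm; assumption.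
      * right. split; [|exists k; split; [reflexivity|exact Hyx]].
        destruct Hk as [Hk|[_ [j [-> Hsplit]]]]; [lia|].
        assert (Hyz : ltR_in mul A (f (S j)) (f j)) by (apply (proj2 Hf); lia).
        exfalso. exact (R_split_upper_no_right_identity Hxy Hyx
                          (R_split_lower_right_identity Hyz Hsplit)).
    + exists (update g (S m) (f (S k))), (S m).
      split; [|split; [unfold update; rewrite Nat.eqb_refl; reflexivity|left; lia]].
      apply R_chain_snoc; [exact Hg|exact Ax|]. rewrite Hgm. split; assumption.
Qed.

End LeftIdeal.
End Chains.

Theorem theorem3p10 (S : Type) (mul : S -> S -> S)
  (assoc : forall x y z, mul x (mul y z) = mul (mul x y) z)
  (hfin : finite_R_height mul)
  (hker : exists K, is_kernel mul K /\ completely_simple_in mul K)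
  (A : S -> Prop) (hA : left_ideal mul A)
  (n : nat)
  (hn_attained : exists f, R_chain mul (@setT_S S) A f n)
  (hn_max : forall f k, R_chain mul (@setT_S S) A f k -> k <= n) :
  R_height_le mul A (2 * n - 1).
Proof.
  destruct hker as [K [[hK _] K_cs]].
  assert (K_mul : forall u v, K u -> K (mul u v)) by
    (destruct hK as [_ [_ K_mul]]; intros u v Ku; exact (proj2 (K_mul v u I Ku))).
  assert (K_regular : forall a, K a -> exists z, a = mul (mul a z) a).
  { intros a Ka.
    destruct (completely_simple_regular assoc (fun u v Ku _ => K_mul u v Ku) K_cs a Ka)
      as [z [_ Hz]].
    exists z. exact Hz. }
  intros f [|k] Hf; [lia|].
  destruct (R_chain_in_A_to_S assoc hA Hf) as [g [m [Hg [Hgm Hk]]]].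
  pose proof (hn_max g _ Hg).
  destruct Hk as [Hk|[Hk [j [-> Hsplit]]]]; [lia|].
  pose proof (R_split_lower_not_in_kernel assoc hA K K_mul K_regular
                (proj1 Hf j ltac:(lia)) (proj2 Hf j ltac:(lia)) Hsplit) as HnK.
  destruct (ideal_meets_left_ideal hK hA) as [w [Kw Aw]].
  pose proof (ideal_lt_mul_r hK _ _ Kw HnK) as Hlt. rewrite <- Hgm in Hlt.
  pose proof (R_chain_snoc Hg (left_ideal_mul hA _ _ Aw) Hlt) as Hlonger.
  pose proof (hn_max _ _ Hlonger). lia.
Qed.
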